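(* Consider two agents with combination matrix $A=\begin{bmatrix}a&1-a\\1-a&a\end{bmatrix}$, $a\in(0,1)$, so $p=[0.5;0.5]$, $P=0.5I_2$. Let $\overline{A}=(I_2+A)/2$, let $(P-AP)/2=U\Sigma U^{\mathsf{T}}$ be an eigendecomposition and $V=U\Sigma^{1/2}U^{\mathsf{T}}$. For step-size $\mu$ and $\sigma^2>0$, define $Q_d=\begin{bmatrix}(1-\mu\sigma^2)\overline{A} & -2V\\ (1-\mu\sigma^2)V\overline{A} & \overline{A}\end{bmatrix}\in\mathbb{R}^{4\times4}$. Then $Q_d$ admits the decomposition $Q_d=X\overline{Q}_dX^{-1}$ with $\overline{Q}_d=\begin{bmatrix}1&0\\0&E_d\end{bmatrix}$, $E_d=\begin{bmatrix}1-\mu\sigma^2&0&0\\0&(1-\mu\sigma^2)a&-\sqrt{2-2a}\\0&(1-\mu\sigma^2)a\sqrt{\frac{1-a}{2}}&a\end{bmatrix}$, and $X=[r\ \ X_R]$, $X^{-1}=\begin{bmatrix}\ell^{\mathsf{T}}\\ X_L\end{bmatrix}$ with $X_R\in\mathbb{R}^{4\times3}$, $X_L\in\mathbb{R}^{3\times4}$, $r=\frac12\begin{bmatrix}0\\ \mathds{1}_2\end{bmatrix}\in\mathbb{R}^4$, $\ell=\begin{bmatrix}0\\ \mathds{1}_2\end{bmatrix}\in\mathbb{R}^4$ (here $0\in\mathbb{R}^2$).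
   Context: Analytical two-agent mean-square-error example: costs $\frac12(w^{\mathsf{T}}R_{u,k}w-2r_{du,k}^{\mathsf{T}}w)$ with $R_{u,1}=R_{u,2}=\sigma^2I_M$, same step-size $\mu$; the exact diffusion error recursion is $\widetilde{z}_i=(Q_d\otimes I_M)\widetilde{z}_{i-1}$. *)

From HB Require Import structures.
From mathcomp Require Import all_boot all_order all_algebra.
Set Implicit Arguments. Unset Strict Implicit. Unset Printing Implicit Defensive.
Import Order.TTheory GRing.Theory Num.Theory.
Local Open Scope ring_scope.

Definition Acomb (R : ringType) (a : R) : 'M[R]_2 :=
  \matrix_(i < 2, j < 2) (if i == j then a else 1 - a).

Definition Pmat (R : fieldType) : 'M[R]_2 := (2^-1 : R)%:M.

Definition Abar (R : fieldType) (a : R) : 'M[R]_2 :=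
  (2^-1 : R) *: (1%:M + Acomb a).

Definition Vmat (R : rcfType) (U : 'M[R]_2) (s : 'rV[R]_2) : 'M[R]_2 :=
  U *m diag_mx (map_mx Num.sqrt s) *m U^T.

Definition Qd (R : rcfType) (a mu sigma2 : R) (V : 'M[R]_2) : 'M[R]_4 :=
  block_mx ((1 - mu * sigma2) *: Abar a) (- (2%:R *: V))
           ((1 - mu * sigma2) *: (V *m Abar a)) (Abar a).

Definition Ed (R : rcfType) (a mu sigma2 : R) : 'M[R]_3 :=
  \matrix_(i < 3, j < 3)
    match nat_of_ord i, nat_of_ord j with
    | 0, 0 => 1 - mu * sigma2
    | 1, 1 => (1 - mu * sigma2) * a
    | 1, 2 => - Num.sqrt (2%:R - 2%:R * a)
    | 2, 1 => (1 - mu * sigma2) * a * Num.sqrt ((1 - a) / 2%:R)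
    | 2, 2 => a
    | _, _ => 0
    end.

Definition Qbar (R : rcfType) (a mu sigma2 : R) : 'M[R]_4 :=
  block_mx (1%:M : 'M[R]_1) 0 0 (Ed a mu sigma2).

Definition rvec (R : fieldType) : 'cV[R]_4 :=
  (2^-1 : R) *: col_mx (0 : 'cV[R]_2) (const_mx 1).
Definition lvec (R : fieldType) : 'cV[R]_4 :=
  col_mx (0 : 'cV[R]_2) (const_mx 1).

From HB Require Import structures.
From mathcomp Require Import all_boot all_order all_algebra.
From mathcomp Require Import ring lra.
Import Order.TTheory GRing.Theory Num.Theory.
Local Open Scope ring_scope.
Set Implicit Arguments. Unset Strict Implicit. Unset Printing Implicit Defensive.

(* With 1 the all-ones vector, e = (1, -1) and L = e e^T (the Laplacian of the two-node
   graph), A = I - (1 - a) L, so Abar fixes 1 and scales e by a, and (P - AP)/2 = (1 - a)/4 L.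
   The symmetric square root with nonnegative diagonal of a multiple of L is unique, so
   V = (t/2) L with t = sqrt((1 - a)/2); hence V 1 = 0 and V e = t e. Consequently Qd fixes
   (0, 1), scales (1, 0) by 1 - mu sigma2, and acts on span{(e, 0), (0, e)} by the lower 2x2
   block of E_d. X has columns (0, 1/2), (1, 0), (e, 0), (0, e). *)

Section NatIndexedMatrices.
Variable R : nzRingType.

(* Indexing entries by nat lets concrete matrices be computed by case analysis on indices. *)
Definition nat_mx n (f : nat -> nat -> R) : 'M[R]_n := \matrix_(i < n, j < n) f i j.

Lemma eq_nat_mx n f g :
  (forall i j, (i < n)%N -> (j < n)%N -> f i j = g i j) -> nat_mx n f = nat_mx n g.
Proof. by move=> efg; apply/matrixP => i j; rewrite !mxE efg. Qed.

Lemma nat_mx_inj n f g :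
  nat_mx n f = nat_mx n g -> forall i j, (i < n)%N -> (j < n)%N -> f i j = g i j.
Proof.
by move=> /matrixP efg i j ltin ltjn; have := efg (Ordinal ltin) (Ordinal ltjn); rewrite !mxE.
Qed.

Lemma nat_mx_of n (M : 'M[R]_n.+1) : M = nat_mx n.+1 (fun i j => M (inord i) (inord j)).
Proof. by apply/matrixP => i j; rewrite !mxE !inord_val. Qed.

Lemma scale_nat_mx n c f : c *: nat_mx n f = nat_mx n (fun i j => c * f i j).
Proof. by apply/matrixP => i j; rewrite !mxE. Qed.

Lemma opp_nat_mx n f : - nat_mx n f = nat_mx n (fun i j => - f i j).
Proof. by apply/matrixP => i j; rewrite !mxE. Qed.

Lemma add_nat_mx n f g : nat_mx n f + nat_mx n g = nat_mx n (fun i j => f i j + g i j).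
Proof. by apply/matrixP => i j; rewrite !mxE. Qed.

Lemma scalar_nat_mx n c : c%:M = nat_mx n (fun i j => c * (i == j)%:R).
Proof. by apply/matrixP => i j; rewrite !mxE mulr_natr. Qed.

Lemma trmx_nat_mx n f : (nat_mx n f)^T = nat_mx n (fun i j => f j i).
Proof. by apply/matrixP => i j; rewrite !mxE. Qed.

Lemma mul_nat_mx2 f g :
  nat_mx 2 f *m nat_mx 2 g = nat_mx 2 (fun i j => f i 0%N * g 0%N j + f i 1%N * g 1%N j).
Proof. by apply/matrixP => i j; rewrite !mxE !big_ord_recl big_ord0 !mxE addr0. Qed.

Lemma mul_nat_mx4 f g :
  nat_mx 4 f *m nat_mx 4 g =
  nat_mx 4 (fun i j =>
    f i 0%N * g 0%N j + f i 1%N * g 1%N j + f i 2%N * g 2%N j + f i 3%N * g 3%N j).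
Proof. by apply/matrixP => i j; rewrite !mxE !big_ord_recl big_ord0 !mxE addr0 !addrA. Qed.

Lemma block_nat_mx22 f11 f12 f21 f22 :
  block_mx (nat_mx 2 f11) (nat_mx 2 f12) (nat_mx 2 f21) (nat_mx 2 f22) =
  nat_mx 4 (fun i j =>
    if (i < 2)%N then if (j < 2)%N then f11 i j else f12 i (j - 2)%N
    else if (j < 2)%N then f21 (i - 2)%N j else f22 (i - 2)%N (j - 2)%N).
Proof.
apply/matrixP => i j; rewrite !mxE.
case: (splitP i) => i' ei; rewrite !mxE; case: (splitP j) => j' ej.
all: by rewrite !mxE ei ej /= ?ltn_ord ?addKn.
Qed.

Lemma block1_nat_mx n (M : 'M[R]_n.+1) :
  block_mx (1%:M : 'M[R]_1) 0 0 M =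
  nat_mx n.+2 (fun i j =>
    if i == 0%N then (j == 0%N)%:R else if j == 0%N then 0 else M (inord i.-1) (inord j.-1)).
Proof.
apply/matrixP => i j; rewrite !mxE.
case: (splitP i) => i' ei; rewrite !mxE; case: (splitP j) => j' ej.
all: by rewrite ?mxE ei ej /= ?ord1 ?inord_val.
Qed.

End NatIndexedMatrices.

Arguments nat_mx_inj {R n f g} _ i j.

Definition lap2 (R : nzRingType) : 'M[R]_2 := nat_mx 2 (fun i j => if i == j then 1 else -1).

Lemma Acomb_nat_mx (R : nzRingType) (a : R) :
  Acomb a = nat_mx 2 (fun i j => if i == j then a else 1 - a).
Proof. by apply/matrixP => i j; rewrite !mxE. Qed.

Lemma half_Pmat_subAP (R : numFieldType) (a : R) :
  2^-1 *: (Pmat R - Acomb a *m Pmat R) = ((1 - a) / 4%:R) *: lap2 R.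
Proof.
rewrite /Pmat Acomb_nat_mx scalar_nat_mx mul_nat_mx2 opp_nat_mx add_nat_mx !scale_nat_mx.
apply: eq_nat_mx => -[|[|//]] [|[|//]] _ _ /=; by field.
Qed.

Lemma lap2_sqrt_unique (R : rcfType) (v : R) (V : 'M[R]_2) :
  0 <= v -> V^T = V -> (forall i, 0 <= V i i) ->
  V *m V = (2%:R * v ^+ 2) *: lap2 R -> V = v *: lap2 R.
Proof.
move=> v_ge0 symV diagV sqrV.
pose w i j := V (inord i) (inord j).
have defV : V = nat_mx 2 w := nat_mx_of V.
rewrite defV trmx_nat_mx in symV; rewrite defV mul_nat_mx2 scale_nat_mx in sqrV.
have e00 := nat_mx_inj sqrV 0%N 0%N erefl erefl.
have e01 := nat_mx_inj sqrV 0%N 1%N erefl erefl.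
have e11 := nat_mx_inj sqrV 1%N 1%N erefl erefl.
have w10 := nat_mx_inj symV 0%N 1%N erefl erefl.
have p_ge0 : 0 <= w 0 0 := diagV _.
have r_ge0 : 0 <= w 1 1 := diagV _.
rewrite /= in e00 e01 e11 w10; rewrite w10 in e00 e11.
move: e00 e01 e11 p_ge0 r_ge0.
set p := w 0 0; set q := w 0 1; set r := w 1 1 => e00 e01 e11 p_ge0 r_ge0.
have pr : p = r by apply/eqP; rewrite -(@eqrXn2 _ 2) //; apply/eqP; lra.
have qp : q = - p.
  have /eqP : (p + q) ^+ 2 = 0 by rewrite -pr in e01; lra.
  by rewrite sqrf_eq0 => /eqP; lra.
have pv : p = v by apply/eqP; rewrite -(@eqrXn2 _ 2) //; apply/eqP; rewrite qp in e00; lra.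
rewrite defV /lap2 scale_nat_mx; apply: eq_nat_mx => -[|[|//]] [|[|//]] _ _ /=.
- by rewrite -/p pv mulr1.
- by rewrite -/q qp pv mulrN1.
- by rewrite w10 -/q qp pv mulrN1.
- by rewrite -/r -pr pv mulr1.
Qed.

Section OrthogonalConjugation.
Variables (R : realDomainType) (n : nat) (U : 'M[R]_n).

Lemma trmx_conj_diag (d : 'rV[R]_n) : (U *m diag_mx d *m U^T)^T = U *m diag_mx d *m U^T.
Proof. by rewrite !trmx_mul trmxK tr_diag_mx mulmxA. Qed.

Lemma mul_conj_diag (d e : 'rV[R]_n) : U^T *m U = 1%:M ->
  (U *m diag_mx d *m U^T) *m (U *m diag_mx e *m U^T) = U *m (diag_mx d *m diag_mx e) *m U^T.
Proof. by move=> UTU; rewrite !mulmxA -(mulmxA _ U^T) UTU mulmx1 -(mulmxA U). Qed.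

Lemma conj_diag_ge0 (d : 'rV[R]_n) : (forall j, 0 <= d 0 j) ->
  forall i, 0 <= (U *m diag_mx d *m U^T) i i.
Proof.
move=> d_ge0 i; rewrite mul_mx_diag !mxE; apply: sumr_ge0 => k _.
by rewrite !mxE mulrAC -expr2 mulr_ge0 ?sqr_ge0.
Qed.

End OrthogonalConjugation.

Section SquareRootFactor.
Variables (R : rcfType) (U : 'M[R]_2) (s : 'rV[R]_2).
Hypotheses (UTU : U^T *m U = 1%:M) (s_ge0 : forall j, 0 <= s 0 j).

Lemma trmx_Vmat : (Vmat U s)^T = Vmat U s.
Proof. exact: trmx_conj_diag. Qed.

Lemma Vmat_diag_ge0 i : 0 <= Vmat U s i i.
Proof. by apply: conj_diag_ge0 => j; rewrite mxE sqrtr_ge0. Qed.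

Lemma Vmat_sqr : Vmat U s *m Vmat U s = U *m diag_mx s *m U^T.
Proof.
rewrite mul_conj_diag // mulmx_diag; congr (_ *m diag_mx _ *m _).
by apply/rowP => j; rewrite !mxE -expr2 sqr_sqrtr.
Qed.

End SquareRootFactor.

Section Eigenbasis.
Variable R : numFieldType.

Definition Xd : 'M[R]_4 := nat_mx 4 (fun i j =>
  match i, j with
  | 0, 1 | 0, 2 | 1, 1 | 2, 3 => 1
  | 1, 2 | 3, 3 => -1
  | 2, 0 | 3, 0 => 2^-1
  | _, _ => 0
  end).

Definition Yd : 'M[R]_4 := nat_mx 4 (fun i j =>
  match i, j with
  | 0, 2 | 0, 3 => 1
  | 1, 0 | 1, 1 | 2, 0 | 3, 2 => 2^-1
  | 2, 1 | 3, 3 => - 2^-1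
  | _, _ => 0
  end).

Lemma mulmx_Xd_Yd : Xd *m Yd = 1%:M.
Proof.
rewrite mul_nat_mx4 scalar_nat_mx.
by apply: eq_nat_mx => -[|[|[|[|//]]]] [|[|[|[|//]]]] _ _ /=; field.
Qed.

Lemma unitmx_Xd : Xd \in unitmx.
Proof. by case: (mulmx1_unit mulmx_Xd_Yd). Qed.

Lemma invmx_Xd : invmx Xd = Yd.
Proof. by rewrite -[invmx _]mulmx1 -mulmx_Xd_Yd mulmxA mulVmx ?unitmx_Xd ?mul1mx. Qed.

Lemma col0_Xd : col ord0 Xd = rvec R.
Proof.
apply/colP => i; rewrite !mxE; case: (@splitP 2 2 i) => -[[|[|//]] ?] ->.
all: by rewrite !mxE /= ?mulr0 ?mulr1.
Qed.

Lemma row0_Yd : row ord0 Yd = (lvec R)^T.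
Proof.
apply/rowP => j; rewrite !mxE; case: (@splitP 2 2 j) => -[[|[|//]] ?] ->.
all: by rewrite !mxE.
Qed.

End Eigenbasis.

Lemma mulmx_Qd_Xd (R : rcfType) (a mu sigma2 : R) :
  Qd a mu sigma2 ((Num.sqrt ((1 - a) / 2%:R) / 2%:R) *: lap2 R) *m Xd R =
  Xd R *m Qbar a mu sigma2.
Proof.
have sqrt_2_2a : Num.sqrt (2%:R - 2%:R * a) = 2%:R * Num.sqrt ((1 - a) / 2%:R).
  have -> : 2%:R - 2%:R * a = 2%:R ^+ 2 * ((1 - a) / 2%:R) by field.
  by rewrite sqrtrM ?sqr_ge0 // sqrtr_sqr ger0_norm.
rewrite /Qd /Abar /lap2 Acomb_nat_mx scalar_nat_mx.
rewrite !(add_nat_mx, scale_nat_mx, mul_nat_mx2, opp_nat_mx) block_nat_mx22.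
rewrite /Qbar block1_nat_mx !mul_nat_mx4.
apply: eq_nat_mx => -[|[|[|[|//]]]] [|[|[|[|//]]]] _ _ /=.
all: by rewrite /Ed ?mxE ?inordK //= ?sqrt_2_2a; field.
Qed.

Theorem lemma5 (R : rcfType) (a mu sigma2 : R)
  (ha0 : 0 < a) (ha1 : a < 1) (hmu : 0 < mu) (hs : 0 < sigma2)
  (U : 'M[R]_2) (s : 'rV[R]_2)
  (hU : U *m U^T = 1%:M)
  (hs0 : forall j, 0 <= s ord0 j)
  (heig : (2^-1 : R) *: (Pmat R - Acomb a *m Pmat R) = U *m diag_mx s *m U^T) :
  exists X : 'M[R]_4,
    [/\ X \in unitmx,
        col ord0 X = rvec R,
        row ord0 (invmx X) = (lvec R)^T &
        Qd a mu sigma2 (Vmat U s) = X *m Qbar a mu sigma2 *m invmx X].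
Proof.
have UTU : U^T *m U = 1%:M := mulmx1C hU.
set t := Num.sqrt ((1 - a) / 2%:R).
have t_ge0 : 0 <= t / 2%:R by rewrite divr_ge0 ?sqrtr_ge0.
have tE : t ^+ 2 = (1 - a) / 2%:R by rewrite sqr_sqrtr // divr_ge0 // subr_ge0 ltW.
have V_lap2 : Vmat U s = (t / 2%:R) *: lap2 R.
  apply: lap2_sqrt_unique => //; [exact: trmx_Vmat | exact: Vmat_diag_ge0 |].
  rewrite Vmat_sqr // -heig half_Pmat_subAP; congr (_ *: _).
  by rewrite expr_div_n tE; field.
exists (Xd R); split; first exact: unitmx_Xd.
- exact: col0_Xd.
- by rewrite invmx_Xd row0_Yd.
- by rewrite V_lap2 -mulmx_Qd_Xd mulmxK ?unitmx_Xd.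
Qed.
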